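(* Let $\mathbf{d}=(d_1,\dots,d_n)$ be nonnegative reals with $\sum_u d_u>0$, let $(m_k)_{k_{\min}\le k\le k_{\max}}$ be nonnegative integers (with $k_{\min}\ge 2$) satisfying $\sum_k k\,m_k=\sum_{u\in[n]}d_u$, and let $q\in[0,1]$. Let $G$ be the random multi-hypergraph generated by the simplicial Chung–Lu model with inputs $\mathbf{d}$, $(m_k)_k$ and $q$. Then for every $v\in[n]$, $\mathbb{E}[\deg_G(v)]=d_v$.
   Context: Degree in a multi-hypergraph: $\deg_G(v)=\sum_{e\in E(G)}m(v,e)$, where $m(v,e)$ is the multiplicity of $v$ in the (multiset) edge $e$. Let $p(v)=d_v/\sum_{u}d_u$. A Chung–Lu edge of size $k$ is the multiset $\{x_1,\dots,x_k\}$ with $x_1,\dots,x_k$ i.i.d. of law $p$. Simplicial edge of size $k$ given a current list $E$ of edges (with $E_k$ the sublist of edges of size $k$): if $E\setminus E_k$ is empty, return a fresh Chung–Lu edge of size $k$. Otherwise choose $e'$ uniformly at random from the list $E\setminus E_k$; if $|e'|<k$, return the multiset union of $e'$ with a fresh Chung–Lu edge of size $k-|e'|$; if $|e'|>k$, return a uniformly random choice of $k$ of the $|e'|$ entries of $e'$. Simplicial Chung–Lu model: let $S$ be a uniformly random ordering of the multiset of sizes containing $m_k$ copies of $k$ for each $k$. Start with $E$ empty. For each $k$ in $S$ in order, draw an independent $X\sim\mathrm{Bernoulli}(q)$; if $X=1$ generate a simplicial edge of size $k$ given the current $E$, otherwise generate a fresh Chung–Lu edge of size $k$; append it to $E$.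 Output $G=([n],E)$. All random choices are independent except as specified. *)

(* Finite-support probability distributions are represented
   explicitly as weighted lists (outcome, probability); expectation is the
   weighted sum. *)
From HB Require Import structures.
From mathcomp Require Import all_boot all_order all_algebra.
Set Implicit Arguments. Unset Strict Implicit. Unset Printing Implicit Defensive.
Import Order.TTheory GRing.Theory Num.Theory.
Local Open Scope ring_scope.

Section Model.
Variable R : realFieldType.

Definition dist (A : Type) := seq (A * R).
Definition dret (A : Type) (x : A) : dist A := [:: (x, 1)].
Definition dbind (A B : Type) (m : dist A) (f : A -> dist B) : dist B :=
  flatten [seq [seq (y.1, x.2 * y.2) | y <- f x.1] | x <- m].
Definition dexp (A : Type) (m : dist A) (f : A -> R) : R :=
  \sum_(x <- m) x.2 * f x.1.
(* uniform choice of an entry (position) of a nonempty list *)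
Definition dunif (A : Type) (l : seq A) : dist A :=
  [seq (x, (size l)%:R^-1) | x <- l].
Definition dbern (q : R) : dist bool := [:: (true, q); (false, 1 - q)].

Fixpoint ksub (A : Type) (k : nat) (s : seq A) : seq (seq A) :=
  match k, s with
  | 0, _ => [:: [::]]
  | k'.+1, [::] => [::]
  | k'.+1, x :: s' => [seq x :: t | t <- ksub k' s'] ++ ksub k s'
  end.

Variable n : nat.
Variable d : 'I_n -> R.

(* a hyperedge is a multiset of vertices, represented as a list *)
Definition edge := seq 'I_n.

Definition deg (E : seq edge) (v : 'I_n) : nat := \sum_(e <- E) count_mem v e.

Definition vsample : dist 'I_n :=
  [seq (u, d u / \sum_(w < n) d w) | u <- enum 'I_n].

Fixpoint cl_edge (k : nat) : dist edge :=
  if k is k'.+1 then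
    dbind vsample (fun x => dbind (cl_edge k') (fun e => dret (x :: e)))
  else dret [::].

Definition simp_edge (k : nat) (E : seq edge) : dist edge :=
  let L := [seq e <- E | (size e != k)%N] in
  if L is [::] then cl_edge k
  else dbind (dunif L) (fun e' =>
         if (size e' < k)%N then dbind (cl_edge (k - size e')) (fun f => dret (e' ++ f))
         else dunif (ksub k e')).

Fixpoint gen (q : R) (S : seq nat) (E : seq edge) : dist (seq edge) :=
  if S is k :: S' then
    dbind (dbern q) (fun X =>
      dbind (if X then simp_edge k E else cl_edge k) (fun e => gen q S' (rcons E e)))
  else dret E.

Definition sizes (kmin kmax : nat) (m : nat -> nat) : seq nat :=
  flatten [seq nseq (m k) k | k <- iota kmin (kmax.+1 - kmin)].

Definition simplicialCL (kmin kmax : nat) (m : nat -> nat) (q : R) : dist (seq edge) :=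
  dbind (dunif (permutations (sizes kmin kmax m))) (fun S => gen q S [::]).

End Model.

(* Fix v, let p := d_v / \sum_u d_u, and call excess(e) := mult_e(v) - |e| p the
   excess of an edge e.  Then deg_G(v) = \sum_e excess(e) + p \sum_e |e|, and
   \sum_e |e| = \sum_k k m_k = \sum_u d_u, so it suffices that every edge has mean
   excess 0.  A Chung-Lu edge does, each entry being v with probability p.
   Extending an earlier edge e' by a Chung-Lu edge keeps its mean excess, and a
   uniform k-subsample of e' has mean excess (k / |e'|) excess(e'), since each
   entry of e' lies in a fraction 'C(|e'|-1, k-1) / 'C(|e'|, k) = k / |e'| of
   the subsamples.  So the mean excess of a simplicial edge is a combination of
   the mean excesses of the earlier edges whose coefficients depend only on the
   (deterministic) sequence of sizes, and induction along that sequence shows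
   that all mean excesses vanish. *)

From HB Require Import structures.
From mathcomp Require Import all_boot all_order all_algebra.
From mathcomp Require Import ring.
Set Implicit Arguments. Unset Strict Implicit. Unset Printing Implicit Defensive.
Import Order.TTheory GRing.Theory Num.Theory.
Local Open Scope ring_scope.

Section Distributions.
Variable R : realFieldType.
Implicit Types A B C : Type.

Lemma dbind_cat A B (m1 m2 : dist R A) (f : A -> dist R B) :
  dbind (m1 ++ m2) f = dbind m1 f ++ dbind m2 f.
Proof. by rewrite /dbind map_cat flatten_cat. Qed.

Lemma dbind_cons A B x (m : dist R A) (f : A -> dist R B) :
  dbind (x :: m) f = [seq (y.1, x.2 * y.2) | y <- f x.1] ++ dbind m f.
Proof. by []. Qed.

Lemma dbind_dretr A (m : dist R A) : dbind m (@dret R A) = m.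
Proof. by elim: m => [|[x w] m IH] //; rewrite dbind_cons IH /= mulr1. Qed.

Lemma eq_dbind A B (m : dist R A) (f g : A -> dist R B) :
  f =1 g -> dbind m f = dbind m g.
Proof. by move=> fg; rewrite /dbind; congr flatten; apply: eq_map => x; rewrite fg. Qed.

Lemma dbind_dret A B (x : A) (f : A -> dist R B) : dbind (dret R x) f = f x.
Proof.
by rewrite /dbind /= cats0 -[RHS]map_id; apply: eq_map => -[y w]; rewrite mul1r.
Qed.

Lemma dbindA A B C (m : dist R A) (f : A -> dist R B) (g : B -> dist R C) :
  dbind (dbind m f) g = dbind m (fun x => dbind (f x) g).
Proof.
elim: m => [|x m IH] //.
rewrite [dbind (x :: m) f]dbind_cons dbind_cat IH dbind_cons.
congr (_ ++ _); elim: (f x.1) => [|y s IHs] //=.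
rewrite !dbind_cons IHs map_cat -map_comp; congr (_ ++ _).
by apply: eq_map => z /=; rewrite mulrA.
Qed.

Lemma dexp_dret A (x : A) (f : A -> R) : dexp (dret R x) f = f x.
Proof. by rewrite /dexp big_seq1 mul1r. Qed.

Lemma dexp_dbind A B (m : dist R A) (f : A -> dist R B) (g : B -> R) :
  dexp (dbind m f) g = dexp m (fun x => dexp (f x) g).
Proof.
rewrite /dexp /dbind big_flatten big_map; apply: eq_bigr => x _.
rewrite big_map big_distrr /=; apply: eq_bigr => y _.
by rewrite mulrA.
Qed.

Lemma eq_dexp_in (A : eqType) (m : dist R A) (f g : A -> R) :
  {in m, forall x, f x.1 = g x.1} -> dexp m f = dexp m g.
Proof. by move=> fg; apply: eq_big_seq => x /fg ->. Qed.

Lemma dexpD A (m : dist R A) (f g : A -> R) :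
  dexp m (fun x => f x + g x) = dexp m f + dexp m g.
Proof. by rewrite /dexp -big_split; apply: eq_bigr => x _; rewrite mulrDr. Qed.

Lemma dexpB A (m : dist R A) (f g : A -> R) :
  dexp m (fun x => f x - g x) = dexp m f - dexp m g.
Proof. by rewrite /dexp -sumrB; apply: eq_bigr => x _; rewrite mulrBr. Qed.

Lemma dexpZ A (m : dist R A) (c : R) (f : A -> R) :
  dexp m (fun x => c * f x) = c * dexp m f.
Proof. by rewrite /dexp big_distrr; apply: eq_bigr => x _; rewrite mulrCA. Qed.

Lemma dexp_sum A (I : Type) (m : dist R A) (r : seq I) (P : pred I)
    (F : I -> A -> R) :
  dexp m (fun x => \sum_(i <- r | P i) F i x) = \sum_(i <- r | P i) dexp m (F i).
Proof.
rewrite /dexp (eq_bigr (fun x => \sum_(i <- r | P i) x.2 * F i x.1)).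
  exact: exchange_big.
by move=> x _; rewrite big_distrr.
Qed.

Definition mass A (m : dist R A) : R := dexp m (fun _ => 1).

Lemma dexp_cst A (m : dist R A) (c : R) : dexp m (fun _ => c) = c * mass m.
Proof. by rewrite -dexpZ mulr1. Qed.

Lemma mass_dret A (x : A) : mass (dret R x) = 1.
Proof. exact: dexp_dret. Qed.

Lemma mass_dbind (A B : eqType) (m : dist R A) (f : A -> dist R B) :
  {in m, forall x, mass (f x.1) = 1} -> mass (dbind m f) = mass m.
Proof. by move=> fm; rewrite /mass dexp_dbind; apply: eq_dexp_in. Qed.

Lemma support_dbind (A B : eqType) (m : dist R A) (f : A -> dist R B)
    (P : B -> Prop) :
  (forall x, x \in m -> forall y, y \in f x.1 -> P y.1) ->
  forall z, z \in dbind m f -> P z.1.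
Proof.
move=> fP z /flattenP[s /mapP[x mx ->]] fy.
by case/mapP: fy => y fy ->; apply: (fP x mx y fy).
Qed.

Lemma mem_dret (A : eqType) (x : A) z : z \in dret R x -> z.1 = x.
Proof. by rewrite inE => /eqP->. Qed.

Lemma dexp_dunif A (l : seq A) (f : A -> R) :
  dexp (dunif R l) f = (size l)%:R^-1 * \sum_(x <- l) f x.
Proof. by rewrite /dexp /dunif big_map big_distrr. Qed.

Lemma mass_dunif A (l : seq A) : size l != 0%N -> mass (dunif R l) = 1.
Proof.
move=> l0; rewrite /mass dexp_dunif big_const_seq count_predT iter_addr addr0.
by rewrite mulVf ?pnatr_eq0.
Qed.

Lemma support_dunif (A : eqType) (l : seq A) z : z \in dunif R l -> z.1 \in l.
Proof. by case/mapP=> x lx ->. Qed.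

Lemma dexp_dbern (q : R) (f : bool -> R) :
  dexp (dbern q) f = q * f true + (1 - q) * f false.
Proof. by rewrite /dexp big_cons big_seq1. Qed.

Lemma mass_dbern (q : R) : mass (dbern q) = 1.
Proof. by rewrite /mass dexp_dbern !mulr1 addrC subrK. Qed.

End Distributions.

Lemma size_ksub (A : Type) k (s : seq A) : size (ksub k s) = 'C(size s, k).
Proof. by elim: s k => [|x s IH] [|k] //=; rewrite size_cat size_map !IH binS addnC. Qed.

Section Subsequences.
Variable A : eqType.
Implicit Types s t : seq A.

Lemma size_mem_ksub k s t : t \in ksub k s -> size t = k.
Proof.
elim: s k t => [|x s IH] [|k] t //=; rewrite ?inE; try by move/eqP->.
rewrite mem_cat => /orP[/mapP[u su ->]|/IH //].
by rewrite /= (IH _ _ su).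
Qed.

Lemma sum_count_ksub (v : A) k s :
  (\sum_(t <- ksub k.+1 s) count_mem v t = 'C((size s).-1, k) * count_mem v s)%N.
Proof.
elim: s k => [|x s IH] k /=; first by rewrite big_nil muln0.
rewrite big_cat big_map /= big_split /= big_const_seq count_predT iter_addn_0 size_ksub.
rewrite IH -addnA mulnDr; congr (_ + _); first exact: mulnC.
case: k => [|k]; first by case: s {IH} => [|y s]; rewrite /= big_seq1 !bin0 mul1n.
rewrite IH -mulnDl; case: s {IH} => [|y s] /=; first by rewrite !muln0.
by rewrite binS addnC.
Qed.

End Subsequences.

Section Model.
Variables (R : realFieldType) (n : nat) (d : 'I_n -> R) (v : 'I_n).
Let D := \sum_(w < n) d w.
Hypothesis D_neq0 : D != 0.
Let p := d v / D.

Lemma dexp_vsample (f : 'I_n -> R) :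
  dexp (vsample d) f = \sum_(u < n) d u / D * f u.
Proof. by rewrite /dexp /vsample big_map big_enum. Qed.

Lemma mass_vsample : mass (vsample d) = 1.
Proof.
rewrite /mass dexp_vsample; under eq_bigr do rewrite mulr1.
by rewrite -mulr_suml mulfV.
Qed.

Lemma mass_cl_edge k : mass (cl_edge d k) = 1.
Proof.
elim: k => [|k IH] /=; first exact: mass_dret.
rewrite mass_dbind ?mass_vsample // => x _.
by rewrite mass_dbind // => e _; apply: mass_dret.
Qed.

Lemma size_cl_edge k z : z \in cl_edge d k -> size z.1 = k.
Proof.
elim: k z => [|k IH] z /=; first by move/mem_dret->.
apply: (support_dbind (P := fun e => size e = k.+1)) => x _ y.
apply: (support_dbind (P := fun e => size e = k.+1)) => e /IH e_k w /mem_dret-> /=.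
by rewrite e_k.
Qed.

Lemma count_cl_edge k :
  dexp (cl_edge d k) (fun e => (count_mem v e)%:R) = k%:R * p.
Proof.
elim: k => [|k IH] /=; first by rewrite dexp_dret mul0r.
rewrite dexp_dbind (eq_dexp_in (g := fun x => (x == v)%:R + k%:R * p)) => [|x _].
  rewrite dexpD dexp_cst mass_vsample mulr1 dexp_vsample (bigD1 v) //= eqxx mulr1.
  rewrite big1 ?addr0 => [|u /negbTE->]; last by rewrite mulr0.
  by rewrite -natr1 mulrDl mul1r addrC.
rewrite dexp_dbind (eq_dexp_in (g := fun e => (x.1 == v)%:R + (count_mem v e)%:R)).
  by rewrite dexpD dexp_cst mass_cl_edge mulr1 IH.
by move=> e _; rewrite dexp_dret natrD.
Qed.

Definition excess (e : edge n) : R := (count_mem v e)%:R - (size e)%:R * p.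

Lemma excess_cat e f : excess (e ++ f) = excess e + excess f.
Proof. by rewrite /excess count_cat size_cat !natrD mulrDl opprD addrACA. Qed.

Lemma excess_cl_edge k : dexp (cl_edge d k) excess = 0.
Proof.
rewrite dexpB count_cl_edge (eq_dexp_in (g := fun _ => k%:R * p)).
  by rewrite dexp_cst mass_cl_edge mulr1 subrr.
by move=> z /size_cl_edge->.
Qed.

Lemma excess_extend e k :
  dexp (dbind (cl_edge d k) (fun f => dret R (e ++ f))) excess = excess e.
Proof.
rewrite dexp_dbind (eq_dexp_in (g := fun f => excess e + excess f)).
  by rewrite dexpD dexp_cst mass_cl_edge excess_cl_edge mulr1 addr0.
by move=> f _; rewrite dexp_dret excess_cat.
Qed.

Lemma excess_ksub k e : (k <= size e)%N ->
  dexp (dunif R (ksub k e)) excess = k%:R / (size e)%:R * excess e.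
Proof.
rewrite dexp_dunif size_ksub; case: k => [_|k le_ke].
  by case: e => [|x e]; rewrite /= big_seq1 /excess !mul0r subrr mulr0.
set j := size e in le_ke *.
rewrite /excess sumrB [X in _ - X](eq_big_seq (fun=> k.+1%:R * p)); last first.
  by move=> t /size_mem_ksub->.
rewrite -natr_sum sum_count_ksub big_const_seq count_predT iter_addr addr0 size_ksub -/j.
have j0 : j%:R != 0 :> R by rewrite pnatr_eq0 -lt0n (leq_ltn_trans _ le_ke).
have C0 : 'C(j, k.+1)%:R != 0 :> R by rewrite pnatr_eq0 -lt0n bin_gt0.
have binE : 'C(j.-1, k)%:R = k.+1%:R * 'C(j, k.+1)%:R / j%:R :> R.
  by rewrite -natrM -mul_bin_diag natrM mulrAC mulfV ?mul1r.
by rewrite natrM binE -mulr_natr; field; rewrite C0 j0.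
Qed.

Definition simp_weight k j : R := if (j < k)%N then 1 else k%:R / j%:R.

Lemma excess_simp_edge k (E : seq (edge n)) :
  dexp (simp_edge d k E) excess =
  (size [seq e <- E | size e != k])%:R^-1 *
  \sum_(e <- E | size e != k) simp_weight k (size e) * excess e.
Proof.
rewrite /simp_edge -big_filter.
case: [seq e <- E | size e != k] => [|e0 L].
  by rewrite excess_cl_edge big_nil mulr0.
rewrite dexp_dbind dexp_dunif; congr (_ * _); apply: eq_bigr => e _.
rewrite /simp_weight; case: ltnP => [_|le_ke]; first by rewrite excess_extend mul1r.
exact: excess_ksub.
Qed.

Lemma mass_simp_edge k (E : seq (edge n)) : mass (simp_edge d k E) = 1.
Proof.
rewrite /simp_edge; case: [seq e <- E | size e != k] => [|e0 L].
  exact: mass_cl_edge.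
rewrite mass_dbind ?mass_dunif // => e _; case: ltnP => le_ke.
  by rewrite mass_dbind ?mass_cl_edge // => f _; apply: mass_dret.
by rewrite mass_dunif // size_ksub -lt0n bin_gt0.
Qed.

Lemma size_simp_edge k (E : seq (edge n)) z : z \in simp_edge d k E -> size z.1 = k.
Proof.
rewrite /simp_edge; case: [seq e <- E | size e != k] => [|e0 L].
  exact: size_cl_edge.
apply: (support_dbind (P := fun e => size e = k)) => e _.
case: ltnP => [lt_ek|_]; last by move=> y /support_dunif /size_mem_ksub.
apply: (support_dbind (P := fun e => size e = k)) => f /size_cl_edge f_k y /mem_dret->.
by rewrite size_cat f_k subnKC // ltnW.
Qed.

Variable q : R.

Definition step k (E : seq (edge n)) : dist R (seq (edge n)) :=
  dbind (dbern q) (fun X =>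
    dbind (if X then simp_edge d k E else cl_edge d k) (fun e => dret R (rcons E e))).

Lemma gen_cons k S E : gen d q (k :: S) E = dbind (step k E) (gen d q S).
Proof.
rewrite /step dbindA /=; apply: eq_dbind => X.
by rewrite dbindA; apply: eq_dbind => e; rewrite dbind_dret.
Qed.

Lemma mass_step k E : mass (step k E) = 1.
Proof.
rewrite mass_dbind ?mass_dbern // => -[[] w] _ /=.
  by rewrite mass_dbind ?mass_simp_edge // => e _; apply: mass_dret.
by rewrite mass_dbind ?mass_cl_edge // => e _; apply: mass_dret.
Qed.

Lemma mem_step k E z :
  z \in step k E -> exists2 e : edge n, z.1 = rcons E e & size e = k.
Proof.
pose P E' := exists2 e : edge n, E' = rcons E e & size e = k.
apply: (support_dbind (P := P)) => -[X w] _.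
apply: (support_dbind (P := P)) => e e_k y /mem_dret->; exists e.1 => //.
by case: X e_k => /= [/size_simp_edge|/size_cl_edge].
Qed.

Definition centered (s : seq nat) (mu : dist R (seq (edge n))) :=
  [/\ mass mu = 1, {in mu, forall z, map size z.1 = s} &
       forall i, (i < size s)%N -> dexp mu (fun E => excess (nth [::] E i)) = 0].

Lemma centered_nil : centered [::] (dret R [::]).
Proof. by split=> [|z /mem_dret->|] //; apply: mass_dret. Qed.

Lemma excess_simp_centered s mu k :
  centered s mu -> dexp mu (fun E => dexp (simp_edge d k E) excess) = 0.
Proof.
case=> _ shape_mu excess_mu.
rewrite (eq_dexp_in (g := fun E => (count (predC1 k) s)%:R^-1 *
   \sum_(i < size s | nth 0%N s i != k)
     simp_weight k (nth 0%N s i) * excess (nth [::] E i))).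
  rewrite dexpZ dexp_sum big1 ?mulr0 // => i _.
  by rewrite dexpZ excess_mu ?mulr0.
move=> z /shape_mu <-; rewrite excess_simp_edge size_filter count_map.
congr (_ * _); rewrite (big_nth [::]) big_mkord size_map.
by apply: eq_big => [i|i _]; rewrite (nth_map [::]).
Qed.

Lemma centered_step s mu k :
  centered s mu -> centered (rcons s k) (dbind mu (step k)).
Proof.
move=> cmu; have [mass_mu shape_mu excess_mu] := cmu.
have size_mu E : E \in mu -> size E.1 = size s by move=> /shape_mu <-; rewrite size_map.
split.
- by rewrite mass_dbind // => E _; apply: mass_step.
- apply: (support_dbind (P := fun E => map size E = rcons s k)).
  by move=> E /shape_mu sE z /mem_step[e -> e_k]; rewrite map_rcons sE e_k.
move=> i; rewrite size_rcons ltnS leq_eqVlt dexp_dbind => /orP[/eqP->|lt_is].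
  rewrite (eq_dexp_in (g := fun E => q * dexp (simp_edge d k E) excess)).
    by rewrite dexpZ (excess_simp_centered _ cmu) mulr0.
  move=> E /size_mu sE; rewrite /step dexp_dbind dexp_dbern /= !dexp_dbind.
  have last_excess (m : dist R (edge n)) :
      dexp m (fun e => dexp (dret R (rcons E.1 e))
                            (fun E' => excess (nth [::] E' (size s)))) =
      dexp m excess.
    by apply: eq_dexp_in => e _; rewrite dexp_dret nth_rcons sE ltnn eqxx.
  by rewrite !last_excess excess_cl_edge mulr0 addr0.
rewrite -(excess_mu i lt_is); apply: eq_dexp_in => E /size_mu sE.
rewrite (eq_dexp_in (g := fun _ => excess (nth [::] E.1 i))).
  by rewrite dexp_cst mass_step mulr1.
by move=> z /mem_step[e -> _]; rewrite nth_rcons sE lt_is.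
Qed.

Lemma centered_gen S s mu : centered s mu -> centered (s ++ S) (dbind mu (gen d q S)).
Proof.
elim: S s mu => [|k S IH] s mu cmu; first by rewrite cats0 dbind_dretr.
rewrite -cat_rcons (eq_dbind _ (gen_cons k S)) -dbindA.
exact/IH/centered_step.
Qed.

Lemma deg_excess (G : seq (edge n)) :
  (deg G v)%:R = \sum_(e <- G) excess e + (sumn (map size G))%:R * p.
Proof.
rewrite /deg /excess sumrB natr_sum sumnE big_map natr_sum mulr_suml.
by rewrite subrK.
Qed.

Lemma dexp_deg_centered s mu :
  centered s mu -> dexp mu (fun G => (deg G v)%:R) = (sumn s)%:R * p.
Proof.
case=> mass_mu shape_mu excess_mu.
rewrite (eq_dexp_in (g := fun G =>
  \sum_(i < size s) excess (nth [::] G i) + (sumn s)%:R * p)).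
  rewrite dexpD dexp_cst mass_mu mulr1 dexp_sum big1 ?add0r // => i _.
  exact: excess_mu.
by move=> G /shape_mu <-; rewrite deg_excess (big_nth [::]) big_mkord size_map.
Qed.

End Model.

Theorem mainTheorem2 (R : realFieldType) (n : nat) (d : 'I_n -> R)
  (kmin kmax : nat) (m : nat -> nat) (q : R) :
  (forall u, 0 <= d u) -> 0 < \sum_(u < n) d u ->
  (2 <= kmin)%N ->
  \sum_(kmin <= k < kmax.+1) ((k * m k)%N)%:R = \sum_(u < n) d u ->
  0 <= q <= 1 ->
  forall v : 'I_n,
    dexp (simplicialCL d kmin kmax m q) (fun G => (deg G v)%:R) = d v.
Proof.
(* The hypotheses on signs, on kmin and on q only make the model a genuine
   probability space; the expectation identity is purely linear. *)
move=> _ D_gt0 _ sum_sizes _ v.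
have D_neq0 : \sum_(u < n) d u != 0 by rewrite gt_eqF.
set S0 := sizes kmin kmax m.
have sumn_S0 : (sumn S0)%:R = \sum_(u < n) d u.
  rewrite -sum_sizes /S0 /sizes sumn_flatten -map_comp sumnE big_map natr_sum.
  by apply: eq_bigr => k _; rewrite /= sumn_nseq.
have deg_gen S : perm_eq S S0 ->
    dexp (gen d q S [::]) (fun G => (deg G v)%:R) = d v.
  move=> /perm_sumn sumn_S.
  rewrite -(dbind_dret [::] (gen d q S)).
  rewrite (dexp_deg_centered (centered_gen D_neq0 q S (centered_nil d v))).
  by rewrite sumn_S sumn_S0 mulrC divfK.
rewrite /simplicialCL -/S0 dexp_dbind (eq_dexp_in (g := fun _ => d v)).
  rewrite dexp_cst mass_dunif ?mulr1 //.
  have : S0 \in permutations S0 by rewrite mem_permutations.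
  by case: (permutations S0).
by move=> [S w] /support_dunif; rewrite mem_permutations; exact: deg_gen.
Qed.
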